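(* Fix $P_1,P_2,N_2,N_3>0$ and let $R^{\rm lo}_G(Q)$ denote the lower bound of Theorem 5 as a function of the state variance $Q$, i.e. $$R^{\rm lo}_G(Q)=\max\min\Big\{R(\alpha,\beta\bar\gamma P_1,\tilde Q,N_2+\gamma P_1),\ R(\alpha,\beta\bar\gamma P_1,\tilde Q,N_3+\gamma P_1)+\tfrac12\log\Big(1+\tfrac{(\sqrt{\bar\beta\bar\gamma P_1}+\sqrt{P_2})^2}{N_3+D+\gamma P_1+\beta\bar\gamma P_1}\Big)\Big\}$$ with $\bar\beta=1-\beta$, $\bar\gamma=1-\gamma$, $D=QN_2/(N_2+\gamma P_1)$, $\alpha_2=\frac{(\sqrt{\bar\beta\bar\gamma P_1}+\sqrt{P_2})^2}{(\sqrt{\bar\beta\bar\gamma P_1}+\sqrt{P_2})^2+\beta\bar\gamma P_1+N_3+D+\gamma P_1}$, $\tilde Q=\tilde Q_S(\alpha_2,Q,D)$, maximized over $\beta,\gamma\in[0,1]$ and $\alpha\in\mathcal A(\beta\bar\gamma P_1,\tilde Q,N_2+\gamma P_1)\cap\mathcal A(\beta\bar\gamma P_1,\tilde Q,N_3+\gamma P_1)$. Then $$\lim_{Q\to\infty}R^{\rm lo}_G(Q)=\frac12\log\Big(1+\frac{P_1}{\max(N_2,N_3)}\Big).$$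
   Context: For nonnegative $t,D,P,Q,N$: $\tilde Q_S(t,Q,D):=(1-t)^2Q-t(t-2)D$, $R(\alpha,P,Q,N):=\frac12\log\Big(\frac{P(P+Q+N)}{PQ(1-\alpha)^2+N(P+\alpha^2Q)}\Big)$, and $\mathcal A(P,Q,N):=\{\alpha\in\mathbb R:R(\alpha,P,Q,N)\ge0\}$. Logarithms base 2. *)

From Stdlib Require Import Reals Lra.
Open Scope R_scope.

Definition log2 (x : R) : R := ln x / ln 2.

Definition QtS (t Q D : R) : R := (1 - t) ^ 2 * Q - t * (t - 2) * D.

Definition Rnum (P Q N : R) : R := P * (P + Q + N).
Definition Rden (alpha P Q N : R) : R :=
  P * Q * (1 - alpha) ^ 2 + N * (P + alpha ^ 2 * Q).

Definition Rrate (alpha P Q N : R) : R :=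
  / 2 * log2 (Rnum P Q N / Rden alpha P Q N).

(* alpha \in A(P,Q,N) : R(alpha,P,Q,N) >= 0, where R is required to be a
   genuine real number (argument of the log finite and positive); when the
   argument is 0 (e.g. P = 0) R = -infinity and alpha is not in A. *)
Definition inA (alpha P Q N : R) : Prop :=
  0 < Rnum P Q N /\ 0 < Rden alpha P Q N /\ 0 <= Rrate alpha P Q N.

Definition loSet (P1 P2 N2 N3 Q : R) (r : R) : Prop :=
  exists beta gamma alpha : R,
    0 <= beta <= 1 /\ 0 <= gamma <= 1 /\
    let bbeta := 1 - beta in
    let bgamma := 1 - gamma in
    let D := Q * N2 / (N2 + gamma * P1) in
    let S := (sqrt (bbeta * bgamma * P1) + sqrt P2) ^ 2 in
    let alpha2 := S / (S + beta * bgamma * P1 + N3 + D + gamma * P1) in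
    let Qt := QtS alpha2 Q D in
    let P := beta * bgamma * P1 in
    inA alpha P Qt (N2 + gamma * P1) /\
    inA alpha P Qt (N3 + gamma * P1) /\
    r = Rmin (Rrate alpha P Qt (N2 + gamma * P1))
             (Rrate alpha P Qt (N3 + gamma * P1)
              + / 2 * log2 (1 + S / (N3 + D + gamma * P1 + beta * bgamma * P1))).

From Stdlib Require Import Reals Lra Psatz ClassicalEpsilon.
From Coquelicot Require Import Rcomplements.
Open Scope R_scope.

(* Every rate R(alpha,P,Q,N) is at most the capacity 1/2 log(1 + P/N), since
   (P + N) * den - N * num = Q (P (1 - alpha) - N alpha)^2 >= 0.  With P <= P1 and
   N >= N2, resp. N >= N3, this bounds the first branch of the min by
   1/2 log(1 + P1/N2) and the second by 1/2 log(1 + P1/N3) plus the extra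
   term, which is O(1/Q) because D >= Q N2/(N2 + P1).  Conversely beta = 1,
   gamma = 0, alpha = P1/(P1 + max(N2,N3)) is feasible and comes within
   1/2 log(1 + max(N2,N3)/Q) of 1/2 log(1 + P1/max(N2,N3)). *)

Definition capacity (P N : R) : R := / 2 * log2 (1 + P / N).

Lemma ln2_pos : 0 < ln 2.
Proof. pose proof ln_lt_2; lra. Qed.

Lemma Rdiv_le_cross a b c d : 0 < b -> 0 < d -> a * d <= c * b -> a / b <= c / d.
Proof.
  intros Hb Hd H. apply Rle_div_l; [lra|].
  replace (c / d * b) with (c * b / d) by (field; lra).
  apply Rle_div_r; lra.
Qed.

Lemma log2_le x y : 0 < x -> x <= y -> log2 x <= log2 y.
Proof.
  intros Hx Hxy. unfold log2, Rdiv. apply Rmult_le_compat_r.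
  - left; apply Rinv_0_lt_compat, ln2_pos.
  - now apply ln_le.
Qed.

Lemma log2_1 : log2 1 = 0.
Proof. unfold log2. rewrite ln_1. apply Rdiv_0_l. Qed.

Lemma log2_div x y : 0 < x -> 0 < y -> log2 (x / y) = log2 x - log2 y.
Proof.
  intros Hx Hy. unfold log2. rewrite ln_div by assumption.
  pose proof ln2_pos. field. lra.
Qed.

Lemma log2_le_sub1 x : 0 < x -> log2 x <= (x - 1) / ln 2.
Proof.
  intros Hx. unfold log2, Rdiv. apply Rmult_le_compat_r.
  - left; apply Rinv_0_lt_compat, ln2_pos.
  - pose proof (exp_ineq1_le (ln x)) as H. rewrite exp_ln in H; lra.
Qed.

Lemma capacity_le P N P' N' :
  0 <= P -> 0 < N -> P / N <= P' / N' -> capacity P N <= capacity P' N'.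
Proof.
  intros HP HN H. unfold capacity. apply Rmult_le_compat_l; [lra|].
  apply log2_le; [|lra].
  pose proof (Rdiv_le_0_compat P N HP HN). lra.
Qed.

Lemma capacity_le_compat P N P' N' :
  0 <= P <= P' -> 0 < N' <= N -> capacity P N <= capacity P' N'.
Proof.
  intros HP HN. apply capacity_le; [lra|lra|].
  unfold Rdiv. apply Rmult_le_compat; try lra.
  - left; apply Rinv_0_lt_compat; lra.
  - apply Rinv_le_contravar; lra.
Qed.

Lemma capacity_nonneg P N : 0 <= P -> 0 < N -> 0 <= capacity P N.
Proof.
  intros HP HN.
  replace 0 with (capacity 0 N) at 1
    by (unfold capacity; rewrite Rdiv_0_l, Rplus_0_r, log2_1; ring).
  apply capacity_le_compat; lra.
Qed.

Lemma capacity_le_snr P N : 0 <= P -> 0 < N -> capacity P N <= P / N / (2 * ln 2).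
Proof.
  intros HP HN. pose proof (Rdiv_le_0_compat P N HP HN). pose proof ln2_pos.
  unfold capacity. eapply Rle_trans.
  - apply Rmult_le_compat_l; [lra|]. apply log2_le_sub1. lra.
  - right. field. lra.
Qed.

Lemma capacity_vanishes P eps : 0 <= P -> 0 < eps ->
  exists N0, 0 <= N0 /\ forall N, N0 < N -> capacity P N < eps.
Proof.
  intros HP Heps. pose proof ln2_pos.
  exists (P / (2 * ln 2 * eps)). split; [apply Rdiv_le_0_compat; nra|].
  intros N HN.
  assert (HN0 : 0 < N) by (pose proof (Rdiv_le_0_compat P (2 * ln 2 * eps) HP ltac:(nra)); lra).
  eapply Rle_lt_trans; [apply capacity_le_snr; assumption|].
  replace (P / N / (2 * ln 2)) with (P / (2 * ln 2 * eps) * eps / N) by (field; lra).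
  apply Rlt_div_l; nra.
Qed.

Lemma Rden_pos a P Q N : 0 < P -> 0 < N -> 0 <= Q -> 0 < Rden a P Q N.
Proof.
  intros HP HN HQ. unfold Rden.
  assert (0 <= P * Q * (1 - a) ^ 2)
    by (apply Rmult_le_pos; [nra|apply pow2_ge_0]).
  assert (0 <= a ^ 2 * Q) by (apply Rmult_le_pos; [apply pow2_ge_0|lra]).
  assert (0 < N * (P + a ^ 2 * Q)) by (apply Rmult_lt_0_compat; lra).
  lra.
Qed.

Lemma Rrate_le_capacity a P Q N :
  inA a P Q N -> 0 < N -> 0 <= Q -> Rrate a P Q N <= capacity P N.
Proof.
  intros [Hnum [Hden _]] HN HQ. unfold Rrate, capacity.
  apply Rmult_le_compat_l; [lra|]. apply log2_le; [now apply Rdiv_lt_0_compat|].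
  replace (1 + P / N) with ((P + N) / N) by (field; lra).
  apply Rdiv_le_cross; [assumption..|].
  assert (Hgap : (P + N) * Rden a P Q N - N * Rnum P Q N = Q * (P * (1 - a) - N * a) ^ 2)
    by (unfold Rden, Rnum; ring).
  assert (0 <= Q * (P * (1 - a) - N * a) ^ 2) by (apply Rmult_le_pos; [lra|apply pow2_ge_0]).
  lra.
Qed.

(* The coefficient [P / (P + M)] minimises [Rden _ P Q M]; it serves every noise level [N <= M] at once. *)
Lemma inA_at_weight P Q N M :
  0 < P -> 0 < N -> N <= M -> 0 <= Q -> inA (P / (P + M)) P Q N.
Proof.
  intros HP HN HNM HQ. set (a := P / (P + M)).
  assert (Hnum : 0 < Rnum P Q N) by (unfold Rnum; nra).
  assert (Hden := Rden_pos a P Q N HP HN HQ).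
  split; [exact Hnum|split; [exact Hden|]].
  assert (Hgap : Rnum P Q N - Rden a P Q N = P ^ 2 + Q * a ^ 2 * (P + 2 * M - N))
    by (unfold Rnum, Rden, a; field; lra).
  assert (0 <= Q * a ^ 2 * (P + 2 * M - N))
    by (apply Rmult_le_pos; [apply Rmult_le_pos; [lra|apply pow2_ge_0]|lra]).
  unfold Rrate. apply Rmult_le_pos; [lra|]. rewrite <- log2_1.
  pose proof (pow2_ge_0 P).
  apply log2_le; [lra|]. apply Rle_div_r; lra.
Qed.

Lemma Rrate_at_weight_ge P Q N M :
  0 < P -> 0 < N -> N <= M -> 0 <= Q ->
  capacity P M - capacity M (P + Q) <= Rrate (P / (P + M)) P Q N.
Proof.
  intros HP HN HNM HQ. set (a := P / (P + M)).
  assert (Hden := Rden_pos a P Q N HP HN HQ).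
  assert (HdenM : (P + M) * Rden a P Q N <= P * M * (P + Q + M)).
  { assert (Hopt : (P + M) * Rden a P Q M = P * M * (P + Q + M))
      by (unfold Rden, a; field; lra).
    assert (Rden a P Q N <= Rden a P Q M).
    { unfold Rden. pose proof (pow2_ge_0 a).
      assert (0 <= (M - N) * (P + a ^ 2 * Q)) by (apply Rmult_le_pos; nra). nra. }
    nra. }
  pose proof (Rdiv_lt_0_compat P M HP ltac:(lra)).
  pose proof (Rdiv_lt_0_compat M (P + Q) ltac:(lra) ltac:(lra)).
  unfold capacity, Rrate. rewrite <- Rmult_minus_distr_l, <- log2_div by lra.
  apply Rmult_le_compat_l; [lra|]. apply log2_le; [apply Rdiv_lt_0_compat; lra|].
  replace ((1 + P / M) / (1 + M / (P + Q))) with ((P + M) * (P + Q) / (M * (P + Q + M)))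
    by (field; lra).
  apply Rdiv_le_cross; [nra|assumption|]. unfold Rnum.
  assert (0 <= P + Q) by lra.
  assert ((P + M) * (P + Q) * Rden a P Q N <= P * M * (P + Q + M) * (P + Q)) by nra.
  assert (0 <= P * M * (P + Q + M) * N)
    by (repeat apply Rmult_le_pos; lra).
  lra.
Qed.

Lemma QtS_nonneg t Q D : 0 <= t <= 2 -> 0 <= Q -> 0 <= D -> 0 <= QtS t Q D.
Proof.
  intros Ht HQ HD. unfold QtS.
  assert (0 <= (1 - t) ^ 2 * Q) by (apply Rmult_le_pos; [apply pow2_ge_0|lra]).
  assert (0 <= t * (2 - t) * D) by (apply Rmult_le_pos; [nra|lra]).
  nra.
Qed.

Lemma QtS_diag t Q : QtS t Q Q = Q.
Proof. unfold QtS; ring. Qed.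

Lemma sqrt_plus_sq_le x y z : 0 <= x <= y ->
  (sqrt x + sqrt z) ^ 2 <= (sqrt y + sqrt z) ^ 2.
Proof.
  intros Hxy. pose proof (sqrt_pos x). pose proof (sqrt_pos z).
  assert (sqrt x <= sqrt y) by (apply sqrt_le_1_alt; lra).
  apply pow_incr. lra.
Qed.

Section LowerBoundRegion.

Variables P1 P2 N2 N3 : R.
Hypotheses (HP1 : 0 < P1) (HN2 : 0 < N2) (HN3 : 0 < N3).

Lemma loSet_le Q r : 0 < Q -> loSet P1 P2 N2 N3 Q r ->
  r <= capacity P1 (Rmax N2 N3)
       + capacity ((sqrt P1 + sqrt P2) ^ 2 * (N2 + P1) / N2) Q.
Proof.
  intros HQ [b [g [al [Hb [Hg H]]]]]. cbv zeta in H. destruct H as [HA2 [HA3 ->]].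
  set (K := (sqrt P1 + sqrt P2) ^ 2 * (N2 + P1) / N2).
  set (P := b * (1 - g) * P1) in *.
  set (D := Q * N2 / (N2 + g * P1)) in *.
  set (S := (sqrt ((1 - b) * (1 - g) * P1) + sqrt P2) ^ 2) in *.
  set (Qt := QtS (S / (S + P + N3 + D + g * P1)) Q D) in *.
  set (den := N3 + D + g * P1 + P).
  assert (Hbg : 0 <= b * (1 - g) <= 1) by (split; nra).
  assert (HP : 0 <= P <= P1) by (unfold P; split; nra).
  assert (HgP1 : 0 <= g * P1 <= P1) by nra.
  assert (HDmin : Q * N2 / (N2 + P1) <= D).
  { unfold D, Rdiv. apply Rmult_le_compat_l; [nra|].
    apply Rinv_le_contravar; lra. }
  assert (HDmin0 : 0 < Q * N2 / (N2 + P1)) by (apply Rdiv_lt_0_compat; nra).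
  assert (HS : 0 <= S <= (sqrt P1 + sqrt P2) ^ 2).
  { split; [apply pow2_ge_0|]. apply sqrt_plus_sq_le. split; [|nra].
    apply Rmult_le_pos; [|lra]. nra. }
  assert (HQt : 0 <= Qt).
  { apply QtS_nonneg; [|lra|lra]. split.
    - apply Rdiv_le_0_compat; lra.
    - assert (S / (S + P + N3 + D + g * P1) <= 1) by (apply Rle_div_l; lra). lra. }
  assert (Hr2 : Rrate al P Qt (N2 + g * P1) <= capacity P1 N2).
  { eapply Rle_trans; [apply Rrate_le_capacity; [assumption|lra|assumption]|].
    apply capacity_le_compat; lra. }
  assert (Hr3 : Rrate al P Qt (N3 + g * P1) <= capacity P1 N3).
  { eapply Rle_trans; [apply Rrate_le_capacity; [assumption|lra|assumption]|].
    apply capacity_le_compat; lra. }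
  assert (Hextra : capacity S den <= capacity K Q).
  { apply capacity_le; [lra|unfold den; lra|].
    replace (K / Q) with ((sqrt P1 + sqrt P2) ^ 2 / (Q * N2 / (N2 + P1)))
      by (unfold K; field; lra).
    unfold Rdiv at 1 2. apply Rmult_le_compat; try lra.
    - left; apply Rinv_0_lt_compat; unfold den; lra.
    - apply Rinv_le_contravar; unfold den; lra. }
  assert (HK : 0 <= capacity K Q).
  { apply capacity_nonneg; [|lra]. unfold K.
    apply Rdiv_le_0_compat; [apply Rmult_le_pos; [apply pow2_ge_0|]|]; lra. }
  fold den. unfold capacity at 1 in Hextra.
  destruct (Rle_dec N2 N3) as [H23|H32].
  - rewrite Rmax_right by lra. eapply Rle_trans; [apply Rmin_r|]. lra.
  - rewrite Rmax_left by lra. eapply Rle_trans; [apply Rmin_l|]. lra.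
Qed.

(* With [beta = 1] and [gamma = 0] we get [D = Q], hence [Qt = Q] whatever [alpha2] is. *)
Lemma loSet_witness Q : 0 < Q ->
  exists r, loSet P1 P2 N2 N3 Q r /\
            capacity P1 (Rmax N2 N3) - capacity (Rmax N2 N3) Q <= r.
Proof.
  intros HQ. set (M := Rmax N2 N3).
  assert (HM2 : N2 <= M) by apply Rmax_l. assert (HM3 : N3 <= M) by apply Rmax_r.
  assert (HQ0 : 0 <= Q) by lra.
  assert (Hloss : capacity M (P1 + Q) <= capacity M Q)
    by (apply capacity_le_compat; lra).
  eexists. split.
  - exists 1, 0, (P1 / (P1 + M)). do 2 (split; [lra|]). cbv zeta.
    replace (Q * N2 / (N2 + 0 * P1)) with Q by (field; lra).
    replace (1 * (1 - 0) * P1) with P1 by ring.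
    rewrite !Rmult_0_l, !Rplus_0_r, QtS_diag.
    split; [apply inA_at_weight; lra|]. split; [apply inA_at_weight; lra|].
    reflexivity.
  - pose proof (Rrate_at_weight_ge P1 Q N2 M HP1 HN2 HM2 HQ0).
    pose proof (Rrate_at_weight_ge P1 Q N3 M HP1 HN3 HM3 HQ0).
    apply Rmin_glb; [lra|].
    match goal with |- context [/ 2 * log2 (1 + ?S / ?den)] =>
      change (/ 2 * log2 (1 + S / den)) with (capacity S den);
      pose proof (capacity_nonneg S den ltac:(apply pow2_ge_0) ltac:(lra))
    end.
    lra.
Qed.

End LowerBoundRegion.

(* Total: an arbitrary value when [E] has no least upper bound. *)
Definition lub (E : R -> Prop) : R := epsilon (inhabits 0) (is_lub E).

Lemma lub_is_lub E : bound E -> (exists x, E x) -> is_lub E (lub E).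
Proof.
  intros Hb Hne. unfold lub. apply epsilon_spec.
  destruct (completeness E Hb Hne) as [m Hm]. now exists m.
Qed.

Lemma is_lub_dist_le E s L e : is_lub E s ->
  (forall r, E r -> r <= L + e) -> (exists r, E r /\ L - e <= r) ->
  Rabs (s - L) <= e.
Proof.
  intros [Hub Hleast] Hup [r [Hr Hlow]].
  pose proof (Hub r Hr). pose proof (Hleast (L + e) Hup).
  apply Rabs_le; lra.
Qed.

Theorem mainTheorem9 (P1 P2 N2 N3 : R) :
  0 < P1 -> 0 < P2 -> 0 < N2 -> 0 < N3 ->
  exists RloG : R -> R,
    (forall Q : R, 0 < Q -> is_lub (loSet P1 P2 N2 N3 Q) (RloG Q)) /\
    (forall eps : R, 0 < eps -> exists M : R, forall Q : R, M < Q ->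
       Rabs (RloG Q - / 2 * log2 (1 + P1 / Rmax N2 N3)) < eps).
Proof.
  intros HP1 _ HN2 HN3.
  pose proof (loSet_le P1 P2 N2 N3 HP1 HN2 HN3) as Hupper.
  pose proof (loSet_witness P1 P2 N2 N3 HP1 HN2 HN3) as Hwitness.
  set (M := Rmax N2 N3) in *. set (K := (sqrt P1 + sqrt P2) ^ 2 * (N2 + P1) / N2) in *.
  assert (HM : 0 < M) by (pose proof (Rmax_l N2 N3); unfold M; lra).
  assert (HK : 0 <= K)
    by (apply Rdiv_le_0_compat; [apply Rmult_le_pos; [apply pow2_ge_0|]|]; lra).
  assert (Hlub : forall Q, 0 < Q -> is_lub (loSet P1 P2 N2 N3 Q) (lub (loSet P1 P2 N2 N3 Q))).
  { intros Q HQ. apply lub_is_lub.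
    - exists (capacity P1 M + capacity K Q). intros r. now apply Hupper.
    - destruct (Hwitness Q HQ) as [r [Hr _]]. now exists r. }
  exists (fun Q => lub (loSet P1 P2 N2 N3 Q)). split; [exact Hlub|].
  intros eps Heps.
  destruct (capacity_vanishes (K + M) eps ltac:(lra) Heps) as [Q0 [HQ0 Hsmall]].
  exists Q0. intros Q HQ. change (/ 2 * log2 (1 + P1 / M)) with (capacity P1 M).
  apply Rle_lt_trans with (capacity (K + M) Q); [|now apply Hsmall].
  apply (is_lub_dist_le (loSet P1 P2 N2 N3 Q)); [apply Hlub; lra| |].
  - intros r Hr. pose proof (Hupper Q r ltac:(lra) Hr).
    pose proof (capacity_le_compat K Q (K + M) Q ltac:(lra) ltac:(lra)). lra.
  - destruct (Hwitness Q ltac:(lra)) as [r [Hr Hlow]]. exists r. split; [exact Hr|].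
    pose proof (capacity_le_compat M Q (K + M) Q ltac:(lra) ltac:(lra)). lra.
Qed.
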